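(* Let $J\in M(n,\mathbb{R})$, $G=U(n)$, $G'=O(n)$, and let $L$ be a subgroup of $G$. Let $G_J:=\{g\in G: gJ=Jg\}$. If there exists $g\in G$ such that $\mathrm{Ad}(L)(\mathrm{Ad}(g)J)\cap M(n,\mathbb{R})=\emptyset$, then $LG'G_J\subsetneq G$.
   Context: $\mathrm{Ad}(g)J:=gJg^{-1}$ for $g\in U(n)$, and $\mathrm{Ad}(L)P:=\{\mathrm{Ad}(x)P:x\in L\}$. $LG'G_J=\{xyz:x\in L,y\in G',z\in G_J\}$. *)

From HB Require Import structures.
From mathcomp Require Import all_boot all_order all_algebra.
From mathcomp Require Import complex.
From mathcomp Require Import reals.
Set Implicit Arguments. Unset Strict Implicit. Unset Printing Implicit Defensive.
Import Order.TTheory GRing.Theory Num.Theory.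
Local Open Scope ring_scope.

Section Defs.
Variables (R : realType) (n : nat).

Definition cmx (A : 'M[R]_n) : 'M[R[i]]_n := map_mx (fun x => Complex x 0) A.

Definition is_real_cmx (J : 'M[R[i]]_n) : Prop := exists A : 'M[R]_n, J = cmx A.

Definition adjc (g : 'M[R[i]]_n) : 'M[R[i]]_n := (map_mx conjc g)^T.

Definition unitary (g : 'M[R[i]]_n) : Prop := g *m adjc g = 1%:M.

Definition orthogonal (g : 'M[R[i]]_n) : Prop := unitary g /\ is_real_cmx g.

Definition Ad (g J : 'M[R[i]]_n) : 'M[R[i]]_n := g *m J *m invmx g.

Definition stabJ (J g : 'M[R[i]]_n) : Prop := unitary g /\ g *m J = J *m g.

Definition subgroupU (L : 'M[R[i]]_n -> Prop) : Prop :=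
  (forall x, L x -> unitary x) /\ L 1%:M /\
  (forall x y, L x -> L y -> L (x *m y)) /\
  (forall x, L x -> L (invmx x)).

Definition prodLGGJ (L : 'M[R[i]]_n -> Prop) (J : 'M[R[i]]_n) (u : 'M[R[i]]_n) : Prop :=
  exists x y z, [/\ L x, orthogonal y, stabJ J z & u = x *m y *m z].

End Defs.

(** If [g = x y z] with [x] in [L], [y] orthogonal and [z] in [G_J], then
    [Ad(x^-1) (Ad g J) = Ad y (Ad z J) = y J y^T] is a real matrix; so the
    [g] of the hypothesis lies in [U(n)] but not in [L G' G_J]. *)
From Pilot Require Import Defs.
From HB Require Import structures.
From mathcomp Require Import all_boot all_order all_algebra.
From mathcomp Require Import complex.
From mathcomp Require Import reals.
Import Order.TTheory GRing.Theory Num.Theory.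
Local Open Scope ring_scope.

Section UnitaryConjugation.
Variables (R : realType) (n : nat).
Implicit Types (A B J y : 'M[R[i]]_n) (X Y : 'M[R]_n).

Lemma cmxM X Y : cmx (X *m Y) = cmx X *m cmx Y.
Proof.
have -> : cmx (X *m Y) = map_mx (real_complex R) (X *m Y).
  by apply/matrixP => i j; rewrite !mxE.
by rewrite map_mxM; congr (_ *m _); apply/matrixP => i j; rewrite !mxE.
Qed.

Lemma adjcM A B : adjc (A *m B) = adjc B *m adjc A.
Proof. by rewrite /adjc map_mxM trmx_mul. Qed.

Lemma adjc_cmx X : adjc (cmx X) = cmx X^T.
Proof. by apply/matrixP => i j; rewrite !mxE /= oppr0. Qed.

Lemma unitary_unitmx A : unitary A -> A \in unitmx.
Proof. by case/mulmx1_unit. Qed.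

Lemma invmx_unitary A : unitary A -> invmx A = adjc A.
Proof.
move=> uA; rewrite -[invmx A]mulmx1 -uA mulmxA.
by rewrite mulVmx ?mul1mx ?unitary_unitmx.
Qed.

Lemma unitaryM A B : unitary A -> unitary B -> unitary (A *m B).
Proof. by move=> uA uB; rewrite /unitary adjcM mulmxA -(mulmxA A) uB mulmx1. Qed.

Lemma invmxM A B :
  A \in unitmx -> B \in unitmx -> invmx (A *m B) = invmx B *m invmx A.
Proof.
move=> uA uB; have uAB : A *m B \in unitmx by rewrite unitmx_mul uA.
have AB_inv : A *m B *m (invmx B *m invmx A) = 1%:M.
  by rewrite mulmxA mulmxK // mulmxV.
by rewrite -[LHS]mulmx1 -AB_inv mulmxA mulVmx // mul1mx.
Qed.

Lemma AdM A B J : A \in unitmx -> B \in unitmx -> Ad (A *m B) J = Ad A (Ad B J).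
Proof. by move=> uA uB; rewrite /Ad invmxM // !mulmxA. Qed.

Lemma Ad_comm B J : B \in unitmx -> B *m J = J *m B -> Ad B J = J.
Proof. by move=> uB BJ; rewrite /Ad BJ mulmxK. Qed.

Lemma Ad_orthogonal_real y X : Defs.orthogonal y -> is_real_cmx (Ad y (cmx X)).
Proof.
case=> uy [Y eY]; exists (Y *m X *m Y^T).
by rewrite /Ad invmx_unitary // eY adjc_cmx !cmxM.
Qed.

Lemma prodLGGJ_unitary L J u : subgroupU L -> prodLGGJ L J u -> unitary u.
Proof.
case=> LU _ [x [y [z [Lx [uy _] [uz _] ->]]]].
by apply: unitaryM => //; apply: unitaryM => //; apply: LU.
Qed.

Lemma prodLGGJ_Ad_real L X u : subgroupU L -> prodLGGJ L (cmx X) u ->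
  exists2 x, L x & is_real_cmx (Ad x (Ad u (cmx X))).
Proof.
case=> LU [_ [_ LV]] [x [y [z [Lx Oy [uz zJ] ->]]]].
have ux : x \in unitmx by apply/unitary_unitmx/LU.
have uy : y \in unitmx by apply/unitary_unitmx; case: Oy.
have {}uz : z \in unitmx by apply/unitary_unitmx.
exists (invmx x); first exact: LV.
rewrite -AdM ?unitmx_inv ?unitmx_mul ?ux ?uy //.
by rewrite -!mulmxA mulKmx // AdM // [Ad z _]Ad_comm //; apply: Ad_orthogonal_real.
Qed.

End UnitaryConjugation.

Arguments prodLGGJ_Ad_real {R n L X u}.

Theorem lemma6p1 (R : realType) (n : nat) (J : 'M[R]_n)
    (L : 'M[R[i]]_n -> Prop) :
  subgroupU L ->
  (exists g : 'M[R[i]]_n, unitary g /\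
     forall x, L x -> ~ is_real_cmx (Ad x (Ad g (cmx J)))) ->
  (forall u, prodLGGJ L (cmx J) u -> unitary u) /\
  (exists u, unitary u /\ ~ prodLGGJ L (cmx J) u).
Proof.
move=> subL [g [ug notreal]]; split=> [u|]; first exact: prodLGGJ_unitary.
exists g; split=> // gLGGJ.
by have [x Lx] := prodLGGJ_Ad_real subL gLGGJ; apply: notreal.
Qed.
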